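(* Consider a finite reward-free MDP with occupancy polytope $\Phi$, let $d_e^\star\in\Phi$ and $\delta>0$, and define $\mathcal K_\delta:=\{\tilde r\in\Delta(S\times A):\mathrm{subopt}(\tilde r,d_e^\star)\ge\delta\}$. Suppose that for every $\bar r\in\mathcal K_\delta$ there exist $r_{\bar r}\in\mathcal R(d_e^\star)$ and a demonstrator pair $(d_{\bar r},\epsilon_{\bar r})$ with $d_{\bar r}\in\Phi$, $\epsilon_{\bar r}\ge0$, such that \[(\bar r-r_{\bar r})^\top(d_e^\star-d_{\bar r})>0,\qquad \mathrm{subopt}(r_{\bar r},d_{\bar r})\in[\epsilon_{\bar r}-\delta,\epsilon_{\bar r}].\] Then there exists a finite subset $\{\bar r_i\}_{i=1}^N\subseteq\mathcal K_\delta$ such that for every $\tilde r\in\mathcal K_\delta$ there is $i\in[N]$ with \[(\tilde r-r_{\bar r_i})^\top(d_e^\star-d_{\bar r_i})>0\quad\text{and}\quad\mathrm{subopt}(r_{\bar r_i},d_{\bar r_i})\in[\epsilon_{\bar r_i}-\delta,\epsilon_{\bar r_i}].\] In particular, this holds for every $\tilde r\in\Delta(S\times A)$ with $\mathrm{subopt}(\tilde r,d_e^\star)>\delta$, i.e. the finite collection $\{(d_{\bar r_i},\epsilon_{\bar r_i})\}_{i=1}^N$ satisfies this pointwise condition.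
   Context: The MDP has finite $S$, $A$, transitions $P$, initial distribution $\mu_0$, discount $\gamma\in(0,1)$; $(Md)(s)=\sum_a d(s,a)-\gamma\sum_{s',a'}P(s\mid s',a')d(s',a')$ and $\Phi=\{d\ge0:Md=(1-\gamma)\mu_0\}$. Rewards are $r\in\Delta(S\times A)$. $\mathrm{subopt}(r,d):=\max_{\tilde d\in\Phi}r^\top\tilde d-r^\top d$; $\mathcal R(d_e^\star):=\{r\in\Delta(S\times A):\mathrm{subopt}(r,d_e^\star)=0\}$. *)

From HB Require Import structures.
From mathcomp Require Import all_boot all_order all_algebra.
From mathcomp Require Import all_classical all_reals.
Set Implicit Arguments. Unset Strict Implicit. Unset Printing Implicit Defensive.
Import Order.TTheory GRing.Theory Num.Theory.
Local Open Scope ring_scope.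
Local Open Scope classical_set_scope.

Section MDP.
Variables (R : realType) (S A : finType).
(* P s s' a' = P(s | s', a') *)
Variables (P : S -> S -> A -> R) (mu0 : S -> R) (gamma : R).

Definition Mop (d : S -> A -> R) (s : S) : R :=
  \sum_(a : A) d s a - gamma * \sum_(s' : S) \sum_(a' : A) P s s' a' * d s' a'.

Definition Phi : set (S -> A -> R) :=
  [set d | (forall s a, 0 <= d s a) /\ forall s, Mop d s = (1 - gamma) * mu0 s].

Definition inner (r d : S -> A -> R) : R := \sum_(s : S) \sum_(a : A) r s a * d s a.

Definition simplexR (r : S -> A -> R) : Prop :=
  (forall s a, 0 <= r s a) /\ \sum_(s : S) \sum_(a : A) r s a = 1.

Definition subopt (r d : S -> A -> R) : R :=
  sup [set inner r x | x in Phi] - inner r d.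

Definition Rset (de : S -> A -> R) : set (S -> A -> R) :=
  [set r | simplexR r /\ subopt r de = 0].

Definition Kdelta (de : S -> A -> R) (delta : R) : set (S -> A -> R) :=
  [set r | simplexR r /\ delta <= subopt r de].

Definition rsub (r1 r2 : S -> A -> R) : S -> A -> R := fun s a => r1 s a - r2 s a.
Definition dsub (d1 d2 : S -> A -> R) : S -> A -> R := fun s a => d1 s a - d2 s a.
End MDP.

From HB Require Import structures.
From mathcomp Require Import all_boot all_order all_algebra.
From mathcomp Require Import all_classical all_reals all_analysis.
From mathcomp Require Import lra.
Set Implicit Arguments. Unset Strict Implicit. Unset Printing Implicit Defensive.
Import Order.TTheory GRing.Theory Num.Theory.
Import numFieldNormedType.Exports.
Local Open Scope ring_scope.
Local Open Scope classical_set_scope.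

(* The set K_delta is compact in R^(S x A): it lies in the simplex, and it is
   closed because occupancy measures are probability distributions on S x A,
   which makes r |-> subopt r d 2-Lipschitz for the sup norm.  Each rb in
   K_delta lies in the open half-space {r | (r - r_rb)^T (de - d_rb) > 0}, so
   finitely many of these half-spaces already cover K_delta. *)

Lemma lipschitz_continuous (R : realType) (V W : normedModType R) (k : R)
    (f : V -> W) :
  k.-lipschitz f -> continuous f.
Proof.
move=> f_lip x; apply/cvgrPdist_lt => e e_gt0.
have k1_gt0 : 0 < `|k| + 1 by rewrite ltr_wpDl.
near=> z.
have fxz : `|f x - f z| <= k * `|x - z| by exact: (f_lip (x, z)).
apply: (le_lt_trans fxz); apply: (@le_lt_trans _ _ ((`|k| + 1) * `|x - z|)).
  by rewrite ler_wpM2r // (le_trans (ler_norm k)) // lerDl.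
rewrite -ltr_pdivlMl //; near: z.
apply: (@cvgr_dist_lt _ _ _ (nbhs x) (nbhs_filter x) id x); first exact: cvg_id.
by rewrite mulr_gt0 // invr_gt0.
Unshelve. all: by end_near. Qed.

Lemma compact_pointed_subcover (T : ptopologicalType) (K : set T)
    (O : T -> set T) :
  compact K -> (forall x, K x -> open (O x)) -> (forall x, K x -> O x x) ->
  exists s : seq T,
    (forall x, x \in s -> K x) /\ (forall y, K y -> exists2 x, x \in s & O x y).
Proof.
rewrite compact_cover => K_cover O_open O_refl.
have [D D_K K_D] : finite_subset_cover K O K.
  by apply: K_cover => // y Ky; exists y => //; exact: O_refl.
exists (finmap.enum_fset D); split=> [x xD|y /K_D [x xD Oxy]].
  exact/set_mem/D_K.
by exists x.
Qed.

(* Rewards are identified with row vectors to use the normed structure of 'rV,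
   in particular bounded_closed_compact. *)
Section RowEncoding.
Variables (R : realType) (S A : finType).
Local Notation vec := 'rV[R]_#|{: S * A}|.

Definition fun_of_row (v : vec) : S -> A -> R :=
  fun s a => v ord0 (enum_rank (s, a)).

Definition row_of_fun (r : S -> A -> R) : vec :=
  \row_i r (enum_val i).1 (enum_val i).2.

Lemma row_of_funK : cancel row_of_fun fun_of_row.
Proof.
move=> r; apply/funext => s; apply/funext => a.
by rewrite /fun_of_row mxE enum_rankK.
Qed.

Lemma fun_of_rowK : cancel fun_of_row row_of_fun.
Proof.
by move=> v; apply/rowP => i; rewrite mxE /fun_of_row -surjective_pairing enum_valK.
Qed.

Lemma fun_of_rowB (v w : vec) :
  fun_of_row (v - w) = rsub (fun_of_row v) (fun_of_row w).
Proof. by apply/funext => s; apply/funext => a; rewrite /fun_of_row /rsub !mxE. Qed.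

Lemma norm_fun_of_row_le (v : vec) s a : `|fun_of_row v s a| <= `|v|.
Proof.
rewrite [leRHS]/Num.norm /= mx_normrE; apply/bigmax_geP; right => /=.
by exists (ord0, enum_rank (s, a)).
Qed.

Lemma continuous_fun_of_row s a : continuous (fun v : vec => fun_of_row v s a).
Proof. by move=> v; exact: coord_continuous. Qed.

End RowEncoding.

Section Inner.
Variables (R : realType) (S A : finType).
Implicit Types r x : S -> A -> R.

Definition l1norm x : R := \sum_(s : S) \sum_(a : A) `|x s a|.

Lemma normr_le_l1norm x s a : `|x s a| <= l1norm x.
Proof.
rewrite /l1norm (bigD1 s) //= (bigD1 a) //= -addrA lerDl.
by rewrite addr_ge0 // sumr_ge0 // => *; rewrite sumr_ge0.
Qed.

Lemma norm_inner_le r x M :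
  (forall s a, `|r s a| <= M) -> `|inner r x| <= M * l1norm x.
Proof.
move=> rM; rewrite /inner /l1norm mulr_sumr.
apply: le_trans (ler_norm_sum _ _ _) _; apply: ler_sum => s _.
rewrite mulr_sumr; apply: le_trans (ler_norm_sum _ _ _) _; apply: ler_sum => a _.
by rewrite normrM ler_wpM2r.
Qed.

Lemma inner_rsubl r1 r2 x : inner (rsub r1 r2) x = inner r1 x - inner r2 x.
Proof.
rewrite /inner -sumrB; apply: eq_bigr => s _; rewrite -sumrB.
by apply: eq_bigr => a _; rewrite /rsub mulrBl.
Qed.

Lemma inner_fun_of_row_lipschitz x :
  (l1norm x).-lipschitz (fun v : 'rV[R]_#|{: S * A}| => inner (fun_of_row v) x).
Proof.
move=> [v w] _ /=; rewrite -inner_rsubl -fun_of_rowB mulrC.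
by apply: norm_inner_le => s a; exact: norm_fun_of_row_le.
Qed.

Lemma open_inner_gt x b :
  open [set v : 'rV[R]_#|{: S * A}| | b < inner (fun_of_row v) x].
Proof.
apply: (@open_comp _ R (fun v => inner (fun_of_row v) x) [set y | b < y]).
  by move=> v _; exact: lipschitz_continuous (inner_fun_of_row_lipschitz x) v.
exact: open_gt.
Qed.

End Inner.

Section Occupancy.
Variables (R : realType) (S A : finType).
Variables (P : S -> S -> A -> R) (mu0 : S -> R) (gamma : R).
Hypothesis hP1 : forall s' a', \sum_(s : S) P s s' a' = 1.
Hypothesis hmu1 : \sum_(s : S) mu0 s = 1.
Hypothesis hg1 : gamma < 1.
Local Notation Phi := (Phi P mu0 gamma).
Local Notation subopt := (subopt P mu0 gamma).
Implicit Types r d x : S -> A -> R.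

Lemma sum_Mop x :
  \sum_(s : S) Mop P gamma x s = (1 - gamma) * \sum_(s : S) \sum_(a : A) x s a.
Proof.
rewrite /Mop sumrB -mulr_sumr mulrBl mul1r; congr (_ - gamma * _).
rewrite exchange_big /=; apply: eq_bigr => s' _; rewrite exchange_big /=.
by apply: eq_bigr => a' _; rewrite -mulr_suml hP1 mul1r.
Qed.

Lemma Phi_mass x : Phi x -> \sum_(s : S) \sum_(a : A) x s a = 1.
Proof.
move=> [_ x_flow]; apply: (mulfI (x := 1 - gamma)); first by rewrite subr_eq0 gt_eqF.
by rewrite -sum_Mop (eq_bigr _ (fun s _ => x_flow s)) -mulr_sumr hmu1.
Qed.

Lemma l1norm_Phi x : Phi x -> l1norm x = 1.
Proof.
move=> Phix; rewrite -(Phi_mass Phix); case: Phix => x_ge0 _.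
by apply: eq_bigr => s _; apply: eq_bigr => a _; rewrite ger0_norm.
Qed.

Lemma norm_inner_Phi_le r x M :
  (forall s a, `|r s a| <= M) -> Phi x -> `|inner r x| <= M.
Proof. by move=> rM Phix; rewrite -[M]mulr1 -(l1norm_Phi Phix) norm_inner_le. Qed.

Variables (de : S -> A -> R) (hde : Phi de).
Local Notation values r := [set inner r x | x in Phi].

Lemma has_sup_values r : has_sup (values r).
Proof.
split; first by exists (inner r de), de.
exists (l1norm r) => _ [x Phix <-].
apply: le_trans (ler_norm _) _; apply: norm_inner_Phi_le Phix => s a.
exact: normr_le_l1norm.
Qed.

Lemma sup_values_le r r' M :
  (forall s a, `|rsub r r' s a| <= M) -> sup (values r) <= sup (values r') + M.
Proof.
move=> rr'M; apply: ge_sup; first by exists (inner r de), de.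
move=> _ [x Phix <-]; rewrite -lerBlDr.
have : `|inner (rsub r r') x| <= M by exact: norm_inner_Phi_le.
rewrite inner_rsubl ler_norml => /andP[_ le_rr'].
apply: le_trans (_ : inner r' x <= _); first by rewrite lerBlDr -lerBlDl.
by apply: sup_upper_bound; [exact: has_sup_values | exists x].
Qed.

Lemma subopt_lipschitz r r' d M :
  (forall s a, `|rsub r r' s a| <= M) -> Phi d ->
  `|subopt r d - subopt r' d| <= 2 * M.
Proof.
move=> rr'M Phid; rewrite /subopt.
have r'rM s a : `|rsub r' r s a| <= M by rewrite /rsub distrC; exact: rr'M.
have := sup_values_le rr'M; have := sup_values_le r'rM.
have : `|inner (rsub r r') d| <= M by exact: norm_inner_Phi_le.
rewrite inner_rsubl ler_norml => /andP[inner_ge inner_le] sup_le' sup_le.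
rewrite ler_norml; apply/andP; split; lra.
Qed.

End Occupancy.

Section Compactness.
Variables (R : realType) (S A : finType).
Local Notation vec := 'rV[R]_#|{: S * A}|.

Lemma closed_simplex : closed [set v : vec | simplexR (fun_of_row v)].
Proof.
have closed_ge0 : closed [set v : vec | forall s a, 0 <= fun_of_row v s a].
  have -> : [set v : vec | forall s a, 0 <= fun_of_row v s a] =
      \bigcap_(p in setT) [set v | 0 <= fun_of_row v p.1 p.2].
    apply/seteqP; split=> [v v_ge0 [s a] _ | v v_ge0 s a]; first exact: v_ge0.
    exact: (v_ge0 (s, a)).
  apply: closed_bigI => -[s a] _.
  apply: (@preimage_closed _ R (fun v => fun_of_row v s a) [set x | 0 <= x]).
    by move=> v _; exact: continuous_fun_of_row.
  exact: closed_ge.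
have closed_mass1 :
    closed [set v : vec | \sum_(s : S) \sum_(a : A) fun_of_row v s a = 1].
  have mass_inner1 (v : vec) : \sum_(s : S) \sum_(a : A) fun_of_row v s a =
      inner (fun_of_row v) (fun _ _ => 1).
    by apply: eq_bigr => s _; apply: eq_bigr => a _; rewrite mulr1.
  under eq_fun do rewrite mass_inner1.
  apply: (@preimage_closed _ R (fun v => inner (fun_of_row v) (fun _ _ => 1))
                            [set x | x = 1]); last exact: closed_eq.
  by move=> v _; exact: lipschitz_continuous (inner_fun_of_row_lipschitz _) v.
exact: closedI closed_ge0 closed_mass1.
Qed.

Lemma simplex_norm_le1 (v : vec) : simplexR (fun_of_row v) -> `|v| <= 1.
Proof.
move=> [v_ge0 v_mass].
have l1norm_v : l1norm (fun_of_row v) = 1.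
  rewrite -v_mass; apply: eq_bigr => s _; apply: eq_bigr => a _.
  exact: ger0_norm.
rewrite [leLHS]/Num.norm /= mx_normrE; apply/bigmax_leP; split => //= -[i j] _.
rewrite (ord1 i) -{1}[v]fun_of_rowK mxE -l1norm_v.
exact: normr_le_l1norm.
Qed.

Variables (P : S -> S -> A -> R) (mu0 : S -> R) (gamma : R).
Hypothesis hP1 : forall s' a', \sum_(s : S) P s s' a' = 1.
Hypothesis hmu1 : \sum_(s : S) mu0 s = 1.
Hypothesis hg1 : gamma < 1.
Variables (de : S -> A -> R) (hde : Phi P mu0 gamma de) (delta : R).

Lemma closed_subopt_ge :
  closed [set v : vec | delta <= subopt P mu0 gamma (fun_of_row v) de].
Proof.
apply: (@preimage_closed _ R (fun v => subopt P mu0 gamma (fun_of_row v) de)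
                          [set x | delta <= x]); last exact: closed_ge.
move=> v _; apply: (@lipschitz_continuous _ _ _ 2) => -[w w'] _ /=.
apply: (subopt_lipschitz hP1 hmu1 hg1 hde _ hde) => s a; rewrite -fun_of_rowB.
exact: norm_fun_of_row_le.
Qed.

Lemma compact_Kdelta :
  compact [set v : vec | Kdelta P mu0 gamma de delta (fun_of_row v)].
Proof.
apply: bounded_closed_compact; last exact: closedI closed_simplex closed_subopt_ge.
exists 1; split; first exact: real1.
move=> M M_gt1 v [v_simplex _]; apply: le_trans (ltW M_gt1).
exact: simplex_norm_le1.
Qed.

End Compactness.

Theorem mainTheorem9 (R : realType) (S A : finType)
  (P : S -> S -> A -> R) (mu0 : S -> R) (gamma : R)
  (hP0 : forall s s' a', 0 <= P s s' a')
  (hP1 : forall s' a', \sum_(s : S) P s s' a' = 1)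
  (hmu0 : forall s, 0 <= mu0 s) (hmu1 : \sum_(s : S) mu0 s = 1)
  (hg0 : 0 < gamma) (hg1 : gamma < 1)
  (de : S -> A -> R) (hde : Phi P mu0 gamma de)
  (delta : R) (hdelta : 0 < delta)
  (rf : (S -> A -> R) -> (S -> A -> R))
  (df : (S -> A -> R) -> (S -> A -> R))
  (epsf : (S -> A -> R) -> R)
  (hyp : forall rb, Kdelta P mu0 gamma de delta rb ->
     Rset P mu0 gamma de (rf rb) /\ Phi P mu0 gamma (df rb) /\ 0 <= epsf rb /\
     0 < inner (rsub rb (rf rb)) (dsub de (df rb)) /\
     epsf rb - delta <= subopt P mu0 gamma (rf rb) (df rb) <= epsf rb) :
  exists rs : seq (S -> A -> R),
    (forall rb, rb \in rs -> Kdelta P mu0 gamma de delta rb) /\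
    (forall rt, Kdelta P mu0 gamma de delta rt ->
       exists2 rb, rb \in rs &
         0 < inner (rsub rt (rf rb)) (dsub de (df rb)) /\
         epsf rb - delta <= subopt P mu0 gamma (rf rb) (df rb) <= epsf rb) /\
    (forall rt, simplexR rt -> delta < subopt P mu0 gamma rt de ->
       exists2 rb, rb \in rs &
         0 < inner (rsub rt (rf rb)) (dsub de (df rb)) /\
         epsf rb - delta <= subopt P mu0 gamma (rf rb) (df rb) <= epsf rb).
Proof.
pose K := Kdelta P mu0 gamma de delta.
pose halfspace rb rt := 0 < inner (rsub rt (rf rb)) (dsub de (df rb)).
have halfspaceE rb rt : halfspace rb rt =
    (inner (rf rb) (dsub de (df rb)) < inner rt (dsub de (df rb))).
  by rewrite /halfspace inner_rsubl subr_gt0.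
have halfspace_open rb : open [set v | halfspace rb (fun_of_row v)].
  by under eq_fun do rewrite halfspaceE; exact: open_inner_gt.
have [us [us_K K_us]] :=
  compact_pointed_subcover (compact_Kdelta hP1 hmu1 hg1 hde (delta := delta))
  (O := fun u => [set v | halfspace (fun_of_row u) (fun_of_row v)])
  (fun u _ => halfspace_open _) (fun u Ku => (hyp _ Ku).2.2.2.1).
have cover rt : K rt -> exists2 rb, rb \in [seq fun_of_row u | u <- us] &
    halfspace rb rt /\
    epsf rb - delta <= subopt P mu0 gamma (rf rb) (df rb) <= epsf rb.
  move=> Krt; have [|u u_us] := K_us (row_of_fun rt).
    by rewrite /= row_of_funK.
  rewrite /= row_of_funK => u_rt; exists (fun_of_row u); first exact: map_f.
  by split=> //; exact: (hyp _ (us_K _ u_us)).2.2.2.2.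
exists [seq fun_of_row u | u <- us]; split; [|split] => //.
- by move=> _ /mapP [u u_us ->]; exact: us_K.
- by move=> rt rt_simplex /ltW delta_le; exact: cover.
Qed.
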